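(* Let $\varepsilon:H_n\to S_n$ be defined on generators by $\varepsilon(x_{i,j})=\varepsilon(x_{j,i})=(\tau_{i+1}\cdots\tau_{j-1})^{-1}\,\tau_i\,(\tau_{i+1}\cdots\tau_{j-1})$ for $1\le i<j\le n$, where $\tau_k=(k\ k{+}1)\in S_n$. Then $\varepsilon$ is a well-defined homomorphism, the group $EP_n$ is isomorphic to $\ker\varepsilon$, and the normal closure in $VB_n$ of the pure braid group $P_n$ is properly contained in $EP_n$.
   Context: The virtual braid group $VB_n$ is the group with generators $\sigma_i,\rho_i$ ($i=1,\dots,n-1$) and defining relations: $\sigma_i\sigma_{i+1}\sigma_i=\sigma_{i+1}\sigma_i\sigma_{i+1}$ ($1\le i\le n-2$); $\sigma_i\sigma_j=\sigma_j\sigma_i$ ($|i-j|\geq 2$); $\rho_i\rho_{i+1}\rho_i=\rho_{i+1}\rho_i\rho_{i+1}$ ($1\le i\le n-2$); $\rho_i\rho_j=\rho_j\rho_i$ ($|i-j|\geq 2$); $\rho_i^2=1$; $\sigma_i\rho_j=\rho_j\sigma_i$ ($|i-j|\geq2$); $\rho_i\rho_{i+1}\sigma_i=\sigma_{i+1}\rho_i\rho_{i+1}$ ($1\le i\le n-2$). The braid group $B_n$ embeds in $VB_n$ via $\sigma_i\mapsto\sigma_i$, and $P_n\subset B_n$ is the pure braid group (kernel of $B_n\to S_n$, $\sigma_i\mapsto(i\ i{+}1)$). $H_n$ is the normal closure of $\langle\sigma_1,\dots,\sigma_{n-1}\rangle$ in $VB_n$; it is generated by $x_{i,i+1}=\sigma_i$,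 $x_{i,j}=\rho_{j-1}\cdots\rho_{i+1}\sigma_i\rho_{i+1}\cdots\rho_{j-1}$ ($1\le i<j-1\le n-1$), $x_{i+1,i}=\rho_i\sigma_i\rho_i$, $x_{j,i}=\rho_{j-1}\cdots\rho_{i+1}\rho_i\sigma_i\rho_i\rho_{i+1}\cdots\rho_{j-1}$ ($1\le i<j-1\le n-1$). Let $M_n=S_n\rtimes S_n$ with the second factor acting on the first by conjugation, $s_i$ (resp. $t_i$) the transposition $(i\ i{+}1)$ in the first (resp. second) factor, and $\chi:VB_n\to M_n$ the homomorphism $\chi(\sigma_i)=s_i$, $\chi(\rho_i)=t_i$. The extended pure braid group is $EP_n=\ker\chi$. *)

(* Virtual braid groups as finitely presented groups:
   elements of VB_n are words in the generators sigma_i, rho_i (1 <= i <= n-1)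
   and their inverses, modulo the congruence generated by the defining
   relations and free cancellation. *)
From mathcomp Require Import all_boot all_fingroup.

Set Implicit Arguments.
Unset Strict Implicit.
Unset Printing Implicit Defensive.

Inductive gen := Sig of nat | Rho of nat.

Definition gidx (g : gen) : nat := match g with Sig i => i | Rho i => i end.

(* a letter: a generator together with a flag (true = inverse) *)
Definition letter := (gen * bool)%type.
Definition word := seq letter.

Definition linv (l : letter) : letter := (l.1, ~~ l.2).
Definition winv (w : word) : word := rev (map linv w).

Definition s (i : nat) : letter := (Sig i, false).
Definition r (i : nat) : letter := (Rho i, false).

Definition valid (n : nat) (w : word) : bool :=
  all (fun l => (0 < gidx l.1) && (gidx l.1 < n)) w.

Definition far (i j : nat) : bool := (i.+1 < j) || (j.+1 < i).

Inductive vbrel (n : nat) : word -> word -> Prop :=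
| rel_s3 i : 0 < i -> i.+1 < n ->
    vbrel n [:: s i; s i.+1; s i] [:: s i.+1; s i; s i.+1]
| rel_scomm i j : 0 < i < n -> 0 < j < n -> far i j ->
    vbrel n [:: s i; s j] [:: s j; s i]
| rel_r3 i : 0 < i -> i.+1 < n ->
    vbrel n [:: r i; r i.+1; r i] [:: r i.+1; r i; r i.+1]
| rel_rcomm i j : 0 < i < n -> 0 < j < n -> far i j ->
    vbrel n [:: r i; r j] [:: r j; r i]
| rel_rr i : 0 < i < n -> vbrel n [:: r i; r i] [::]
| rel_srcomm i j : 0 < i < n -> 0 < j < n -> far i j ->
    vbrel n [:: s i; r j] [:: r j; s i]
| rel_mixed i : 0 < i -> i.+1 < n ->
    vbrel n [:: r i; r i.+1; s i] [:: s i.+1; r i; r i.+1].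

Inductive wequiv (n : nat) : word -> word -> Prop :=
| we_rel u v : vbrel n u v -> wequiv n u v
| we_free x : wequiv n [:: x; linv x] [::]
| we_refl u : wequiv n u u
| we_sym u v : wequiv n u v -> wequiv n v u
| we_trans u v w : wequiv n u v -> wequiv n v w -> wequiv n u w
| we_cat u u' v v' : wequiv n u u' -> wequiv n v v' -> wequiv n (u ++ v) (u' ++ v').

Inductive prods (S : word -> Prop) : word -> Prop :=
| pr_nil : prods S [::]
| pr_gen w : S w -> prods S w
| pr_inv w : S w -> prods S (winv w)
| pr_cat u v : prods S u -> prods S v -> prods S (u ++ v).

Definition subgroup_gen (n : nat) (S : word -> Prop) : word -> Prop :=
  fun w => valid n w /\ exists w', prods S w' /\ wequiv n w w'.

Definition normal_closure (n : nat) (S : word -> Prop) : word -> Prop :=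
  subgroup_gen n (fun w => exists c t, valid n c /\ S t /\ w = c ++ t ++ winv c).

Definition subgroup_iso (n : nat) (A B : word -> Prop) : Prop :=
  exists f : word -> word,
    [/\ (forall w, A w -> B (f w)),
        (forall u v, A u -> A v -> wequiv n u v -> wequiv n (f u) (f v)),
        (forall u v, A u -> A v -> wequiv n (f (u ++ v)) (f u ++ f v)),
        (forall u v, A u -> A v -> wequiv n (f u) (f v) -> wequiv n u v)
      & (forall w', B w' -> exists w, A w /\ wequiv n (f w) w')].

(* tau n k = the transposition (k k+1) in S_n, points numbered 1..n
   (i.e. ordinals k-1 and k); meaningful for 1 <= k <= n-1 *)
Definition tau (n k : nat) : 'S_n :=
  match n as m return 'S_m with
  | 0 => 1%g
  | m.+1 => tperm (inord k.-1 : 'I_m.+1) (inord k)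
  end.

(* the semidirect product M_n = S_n x| S_n, second factor acting on the
   first by conjugation: (a,h)(b,k) = (a * (h b h^-1), h k) *)
Definition Mn (n : nat) := ('S_n * 'S_n)%type.
Definition mmul (n : nat) (x y : Mn n) : Mn n :=
  ((x.1 * (x.2 * y.1 * x.2^-1)) , x.2 * y.2)%g.
Definition mone (n : nat) : Mn n := (1%g, 1%g).
Definition minv (n : nat) (x : Mn n) : Mn n :=
  ((x.2^-1 * x.1^-1 * x.2), x.2^-1)%g.

Definition chi_gen (n : nat) (g : gen) : Mn n :=
  match g with Sig i => (tau n i, 1%g) | Rho i => (1%g, tau n i) end.
Definition chi_letter (n : nat) (l : letter) : Mn n :=
  if l.2 then minv (chi_gen n l.1) else chi_gen n l.1.
Definition chi (n : nat) (w : word) : Mn n :=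
  foldr (fun l acc => mmul (chi_letter n l) acc) (mone n) w.

Definition EP (n : nat) : word -> Prop :=
  fun w => valid n w /\ chi n w = mone n.

Definition H (n : nat) : word -> Prop :=
  normal_closure n (fun w => exists i, 0 < i < n /\ w = [:: s i]).

(* x_{i,j} = rho_{j-1}..rho_{i+1} sigma_i rho_{i+1}..rho_{j-1}   (i < j) *)
Definition x_up (i j : nat) : word :=
  map r (rev (iota i.+1 (j - i.+1))) ++ [:: s i] ++ map r (iota i.+1 (j - i.+1)).
(* x_{j,i} = rho_{j-1}..rho_i sigma_i rho_i..rho_{j-1}   (i < j) *)
Definition x_down (i j : nat) : word :=
  map r (rev (iota i (j - i))) ++ [:: s i] ++ map r (iota i (j - i)).

Definition tprod (n : nat) (l : seq nat) : 'S_n :=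
  foldr (fun k acc => (tau n k * acc)%g) 1%g l.
Definition eps_val (n i j : nat) : 'S_n :=
  ((tprod n (iota i.+1 (j - i.+1)))^-1 * tau n i * tprod n (iota i.+1 (j - i.+1)))%g.

Definition sigma_word (w : word) : bool :=
  all (fun l => if l.1 is Sig _ then true else false) w.
Definition bperm (n : nat) (w : word) : 'S_n :=
  foldr (fun l acc => ((if l.2 then (tau n (gidx l.1))^-1 else tau n (gidx l.1)) * acc)%g)
        1%g w.
Definition Pn (n : nat) : word -> Prop :=
  fun w => valid n w /\ exists b, valid n b /\ sigma_word b /\ bperm n b = 1%g /\ wequiv n w b.

From mathcomp Require Import all_boot all_fingroup ssralg finalg zmodp zify.
From Stdlib Require Import Setoid Morphisms.

Set Implicit Arguments.
Unset Strict Implicit.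
Unset Printing Implicit Defensive.

Import GRing.Theory.
Open Scope group_scope.

(* Let pi, pi_rho : VB_n -> S_n send (sigma_i, rho_i) to (tau_i, tau_i) and to (1, tau_i)
   respectively ([full_perm], [virt_perm]); then chi w = (pi w * (pi_rho w)^-1, pi_rho w).
   H_n lies in ker pi_rho, so the first component eps of chi is a homomorphism on H_n, and
   EP_n is H_n intersected with ker eps once ker pi_rho is contained in H_n.  For that, push
   every rho_i of a word to the right: what is left is an element of H_n times a rho-word,
   and a rho-word with trivial permutation is trivial in VB_n because the rho_i satisfy the
   Coxeter presentation of S_n (proved with a coset normal form).
   The normal closure of P_n is killed by pi and pi_rho, hence lies in EP_n, but it misses
   (sigma_1 rho_1)^2, which is in EP_n: on {1..n} x Z/3 let sigma_i act by tau_i on the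
   first coordinate, and rho_i act by tau_i on it while adding k - tau_i(k) to the second;
   pure braids act trivially, whereas (sigma_1 rho_1)^2 adds 2. *)

Lemma tperm_braid (T : finType) (a b c : T) : a != b -> b != c -> a != c ->
  tperm a b * tperm b c * tperm a b = tperm b c * tperm a b * tperm b c.
Proof.
move=> ab bc ac.
have conjE (x y z t : T) : tperm x y * tperm z t * tperm x y = tperm z t ^ tperm x y.
  by rewrite /conjg tpermV mulgA.
by rewrite !conjE !tpermJ tpermR tpermL !tpermD // eq_sym.
Qed.

Lemma tperm_comm (T : finType) (a b c d : T) :
  a != c -> a != d -> b != c -> b != d -> commute (tperm a b) (tperm c d).
Proof. by move=> ac ad bc bd; rewrite /commute conjgC tpermJ !tpermD // eq_sym. Qed.

Lemma eq_inord n' x y : x < n'.+1 -> y < n'.+1 ->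
  ((inord x : 'I_n'.+1) == inord y) = (x == y).
Proof. by move=> hx hy; rewrite -val_eqE /= !inordK. Qed.

Lemma tauE n' k : tau n'.+1 k = tperm (inord k.-1) (inord k).
Proof. by []. Qed.

Lemma tauK n k : tau n k * tau n k = 1.
Proof. by case: n => [|n]; rewrite ?mulg1 ?tperm2. Qed.

Lemma tauV n k : (tau n k)^-1 = tau n k.
Proof. by apply/eqP; rewrite eq_invg_mul tauK. Qed.

Lemma tau_braid n i : 0 < i -> i.+1 < n ->
  tau n i * tau n i.+1 * tau n i = tau n i.+1 * tau n i * tau n i.+1.
Proof. by case: n => [|n] // hi hn; apply: tperm_braid; rewrite eq_inord //; lia. Qed.

Lemma tau_comm n i j : 0 < i < n -> 0 < j < n -> far i j -> commute (tau n i) (tau n j).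
Proof.
by case: n => [|n] // hi hj; rewrite /far => hf; apply: tperm_comm; rewrite eq_inord //; lia.
Qed.

Lemma tprod_cat n l1 l2 : tprod n (l1 ++ l2) = tprod n l1 * tprod n l2.
Proof. by elim: l1 => [|k l IH] /=; rewrite ?mul1g // IH mulgA. Qed.

Lemma tprod_rev n l : tprod n (rev l) = (tprod n l)^-1.
Proof.
elim: l => [|k l IH] /=; first by rewrite invg1.
by rewrite rev_cons -cats1 tprod_cat IH /= mulg1 invMg tauV.
Qed.

Add Parametric Relation n : word (wequiv n)
  reflexivity proved by (@we_refl n) symmetry proved by (@we_sym n)
  transitivity proved by (@we_trans n) as wequiv_rel.

Add Parametric Morphism n : (@cat letter) with signature
  wequiv n ==> wequiv n ==> wequiv n as cat_wequiv.
Proof. by move=> *; apply: we_cat. Qed.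

Add Parametric Morphism n x : (cons x) with signature
  wequiv n ==> wequiv n as cons_wequiv.
Proof. by move=> u v; apply: (we_cat (we_refl n [:: x])). Qed.

Lemma winvK : involutive winv.
Proof.
move=> w; rewrite /winv map_rev revK -map_comp.
by elim: w => //= -[g b] w ->; rewrite /linv negbK.
Qed.

Lemma winv_cat u v : winv (u ++ v) = winv v ++ winv u.
Proof. by rewrite /winv map_cat rev_cat. Qed.

Lemma wequiv_catV n w : wequiv n (w ++ winv w) [::].
Proof.
elim: w => [|x w IH]; first by reflexivity.
rewrite -cat1s winv_cat -catA (catA w) IH; exact: we_free.
Qed.

Lemma wequiv_Vcat n w : wequiv n (winv w ++ w) [::].
Proof. by rewrite -{2}(winvK w); apply: wequiv_catV. Qed.

Definition word_conjugates n (S : word -> Prop) : word -> Prop :=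
  fun w => exists c t, valid n c /\ S t /\ w = c ++ t ++ winv c.

Definition spanned n (S : word -> Prop) (w : word) : Prop :=
  exists w', prods S w' /\ wequiv n w w'.

Add Parametric Morphism n S : (spanned n S) with signature
  wequiv n ==> iff as spanned_wequiv.
Proof.
by move=> u v e; split=> -[w [pw ew]]; exists w; split; rewrite // -ew ?e //; reflexivity.
Qed.

Section Spanned.
Variables (n : nat) (S : word -> Prop).

Lemma spanned_nil : spanned n S [::].
Proof. by exists [::]; split; [constructor | reflexivity]. Qed.

Lemma spanned_gen w : S w -> spanned n S w.
Proof. by exists w; split; [constructor | reflexivity]. Qed.

Lemma spanned_inv w : S w -> spanned n S (winv w).
Proof. by exists (winv w); split; [apply: pr_inv | reflexivity]. Qed.

Lemma spanned_cat u v : spanned n S u -> spanned n S v -> spanned n S (u ++ v).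
Proof.
move=> [u' [pu eu]] [v' [pv ev]].
by exists (u' ++ v'); split; [apply: pr_cat | rewrite eu ev; reflexivity].
Qed.

End Spanned.

Lemma subgroup_gen_cat n S u v :
  subgroup_gen n S u -> subgroup_gen n S v -> subgroup_gen n S (u ++ v).
Proof.
by move=> [vu su] [vv sv]; split; [rewrite /valid all_cat; apply/andP | apply: spanned_cat].
Qed.

Lemma conj_cat_wequiv n c u v :
  wequiv n (c ++ (u ++ v) ++ winv c) ((c ++ u ++ winv c) ++ c ++ v ++ winv c).
Proof. by rewrite -!catA (catA (winv c)) wequiv_Vcat; reflexivity. Qed.

Lemma spanned_conj n (S : word -> Prop) c h : valid n c ->
  spanned n (word_conjugates n S) h -> spanned n (word_conjugates n S) (c ++ h ++ winv c).
Proof.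
move=> vc [h' [ph ->]].
elim: ph => {h} [|_ [c' [t [vc' [St ->]]]]|_ [c' [t [vc' [St ->]]]]|u v _ su _ sv].
- by rewrite wequiv_catV; apply: spanned_nil.
- apply: spanned_gen; exists (c ++ c'), t.
  by rewrite /valid all_cat winv_cat -!catA; split=> //; apply/andP.
- rewrite -[c in c ++ _](winvK c) -!winv_cat -catA; apply: spanned_inv; exists (c ++ c'), t.
  by rewrite /valid all_cat winv_cat -!catA; split=> //; apply/andP.
- by rewrite conj_cat_wequiv; apply: spanned_cat.
Qed.

Definition evalw (gT : finGroupType) (f : gen -> gT) (w : word) : gT :=
  foldr (fun l acc => (if l.2 then (f l.1)^-1 else f l.1) * acc) 1 w.

Definition vbrep n (gT : finGroupType) (f : gen -> gT) : Prop :=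
  forall u v, vbrel n u v -> evalw f u = evalw f v.

Section WordEvaluation.
Variables (gT : finGroupType) (f : gen -> gT).

Lemma evalw_cat u v : evalw f (u ++ v) = evalw f u * evalw f v.
Proof. by elim: u => [|l u IH] /=; rewrite ?mul1g // IH mulgA. Qed.

Lemma evalw_winv w : evalw f (winv w) = (evalw f w)^-1.
Proof.
elim: w => [|[g []] w IH]; rewrite ?invg1 // /winv /= rev_cons -cats1 evalw_cat -/(winv w) IH
  invMg /= mulg1 ?invgK //.
Qed.

Lemma evalw_sigma_word (f' : gen -> gT) b : sigma_word b ->
  (forall i, f (Sig i) = f' (Sig i)) -> evalw f b = evalw f' b.
Proof. by move=> + hf; elim: b => [|[[i|i] fl] b IH] //= /IH ->; rewrite hf. Qed.

Variable n : nat.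
Hypothesis frep : vbrep n f.

Lemma evalw_wequiv u v : wequiv n u v -> evalw f u = evalw f v.
Proof.
elim=> {u v} //.
- by move=> [g [|]] /=; rewrite ?invgK ?mulg1 ?mulVg ?mulgV.
- by move=> u v w _ -> _ ->.
- by move=> u u' v v' _ e1 _ e2; rewrite !evalw_cat e1 e2.
Qed.

Lemma evalw_spanned (S : word -> Prop) w : (forall t, S t -> evalw f t = 1) ->
  spanned n S w -> evalw f w = 1.
Proof.
move=> fS [w' [+ /evalw_wequiv ->]]; elim=> {w'} [|t /fS|t /fS|u v _ eu _ ev] //.
- by rewrite evalw_winv => ->; rewrite invg1.
- by rewrite evalw_cat eu ev mulg1.
Qed.

Lemma evalw_word_conjugates (S : word -> Prop) t : (forall t, S t -> evalw f t = 1) ->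
  word_conjugates n S t -> evalw f t = 1.
Proof. by move=> fS [c [u [_ [/fS fu ->]]]]; rewrite !evalw_cat fu evalw_winv mul1g mulgV. Qed.

Lemma evalw_normal_closure (S : word -> Prop) w : (forall t, S t -> evalw f t = 1) ->
  normal_closure n S w -> evalw f w = 1.
Proof. by move=> fS [_]; apply: evalw_spanned => t; apply: evalw_word_conjugates. Qed.

End WordEvaluation.

Lemma mul_morph1 (gT hT : finGroupType) (phi : gT -> hT) :
  {morph phi : x y / x * y} -> phi 1 = 1.
Proof. by move=> phiM; apply: (mulgI (phi 1)); rewrite -phiM !mulg1. Qed.

Lemma evalw_morph (gT hT : finGroupType) (phi : gT -> hT) (f : gen -> gT) w :
  {morph phi : x y / x * y} -> evalw (phi \o f) w = phi (evalw f w).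
Proof.
move=> phiM; have phiV x : phi x^-1 = (phi x)^-1.
  by apply/eqP; rewrite eq_sym eq_invg_mul -phiM mulgV mul_morph1.
by elim: w => [|[g []] w IH] /=; rewrite ?mul_morph1 // IH phiM ?phiV.
Qed.

Definition full_perm n (g : gen) : 'S_n := tau n (gidx g).
Definition virt_perm n (g : gen) : 'S_n := if g is Rho i then tau n i else 1.

Lemma full_perm_rep n : vbrep n (full_perm n).
Proof.
move=> u v []; rewrite /evalw /= /full_perm /= => *;
  by rewrite ?mulg1 ?mulgA ?tau_braid ?tauK //; apply: tau_comm.
Qed.

Lemma virt_perm_rep n : vbrep n (virt_perm n).
Proof.
move=> u v []; rewrite /evalw /= /virt_perm /= => *;
  by rewrite ?mulg1 ?mul1g ?mulgA ?tau_braid ?tauK //; apply: tau_comm.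
Qed.

Lemma evalw_map_r n (f : gen -> 'S_n) ks :
  (forall k, f (Rho k) = tau n k) -> evalw f (map r ks) = tprod n ks.
Proof. by move=> fr; elim: ks => //= k ks ->; rewrite fr. Qed.

Lemma chiE n w :
  chi n w = (evalw (full_perm n) w * (evalw (virt_perm n) w)^-1, evalw (virt_perm n) w).
Proof.
elim: w => [|[[i|i] []] w IH] /=; rewrite ?invg1 ?mulg1 // IH /chi_letter /mmul /minv /=;
  by congr pair; rewrite ?invg1 ?mulg1 ?mul1g ?invMg ?invgK ?mulgA ?mulVg ?mul1g.
Qed.

Lemma EP_evalw n w :
  EP n w <-> [/\ valid n w, evalw (full_perm n) w = 1 & evalw (virt_perm n) w = 1].
Proof.
rewrite /EP chiE /mone; split=> [[vw [+ e2]]|[vw -> ->]]; last by rewrite invg1 mulg1.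
by rewrite e2 invg1 mulg1.
Qed.

Lemma evalw_Pn n (gT : finGroupType) (f : gen -> gT) (phi : 'S_n -> gT) t :
  vbrep n f -> {morph phi : x y / x * y} -> (forall i, f (Sig i) = phi (tau n i)) ->
  Pn n t -> evalw f t = 1.
Proof.
move=> frep phiM fS [_ [b [_ [sb [b1 /(evalw_wequiv frep) ->]]]]].
rewrite (@evalw_sigma_word _ _ (phi \o full_perm n)) // evalw_morph //.
by rewrite [evalw _ b]b1 mul_morph1.
Qed.

Lemma normal_closure_Pn_sub_EP n w : normal_closure n (Pn n) w -> EP n w.
Proof.
move=> wN; apply/EP_evalw; split; first by case: wN.
- apply: (evalw_normal_closure (@full_perm_rep n)) wN => t.
  by apply: (evalw_Pn (phi := id)) => //; apply: full_perm_rep.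
- apply: (evalw_normal_closure (@virt_perm_rep n)) wN => t.
  by apply: (evalw_Pn (phi := fun=> 1)) => // [|x y]; [apply: virt_perm_rep | rewrite mulg1].
Qed.

Definition sigmas n : word -> Prop := fun w => exists i, 0 < i < n /\ w = [:: s i].

Notation Hspan n := (spanned n (word_conjugates n (sigmas n))).

Lemma Hspan_virt_perm n w : Hspan n w -> evalw (virt_perm n) w = 1.
Proof.
apply: (evalw_spanned (@virt_perm_rep n)) => t.
by apply: evalw_word_conjugates => _ [i [_ ->]]; rewrite /= mulg1.
Qed.

Lemma H_virt_perm n w : H n w -> evalw (virt_perm n) w = 1.
Proof. by case=> _; apply: Hspan_virt_perm. Qed.

Lemma sigma_letter_Hspan n i b : 0 < i < n -> Hspan n [:: (Sig i, b)].
Proof.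
move=> hi; have Si : word_conjugates n (sigmas n) [:: s i].
  by exists [::], [:: s i]; split=> //; split=> //; exists i.
by case: b; [apply: (spanned_inv n Si) | apply: spanned_gen].
Qed.

Lemma rho_letter_wequiv n i b : 0 < i < n -> wequiv n [:: (Rho i, b)] [:: r i].
Proof.
case: b => hi; last by reflexivity.
apply: we_trans (we_cat (we_sym (we_rel (rel_rr hi))) (we_refl n [:: (Rho i, true)])) _.
exact: we_cat (we_refl n [:: r i]) (we_free n (r i)).
Qed.

Definition is_rho (l : letter) : bool := if l.1 is Rho _ then true else false.
Definition rho_indices (w : word) : seq nat := [seq gidx l.1 | l <- w & is_rho l].

Lemma rho_decomposition n w : valid n w ->
  exists h, Hspan n h /\ wequiv n w (h ++ map r (rho_indices w)).
Proof.
elim: w => [|[[i|i] b] w IH] /=; first by exists [::]; split; [apply: spanned_nil | reflexivity].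
- move=> /andP[hi /IH [h [sh eh]]]; exists ((Sig i, b) :: h); split.
    by rewrite -cat1s; apply: spanned_cat => //; apply: sigma_letter_Hspan.
  exact: we_cat (we_refl n [:: (Sig i, b)]) eh.
- move=> /andP[hi /IH [h [sh eh]]]; exists ([:: r i] ++ h ++ winv [:: r i]); split.
    by apply: spanned_conj => //=; rewrite hi.
  apply: we_trans (we_cat (rho_letter_wequiv b hi) eh) _.
  rewrite /rho_indices /= -/(rho_indices w) -!catA.
  exact: we_cat (we_refl n (r i :: h)) (we_cat (we_sym (wequiv_Vcat n [:: r i])) (we_refl n _)).
Qed.

(* [rdown a b] is rho_(b-1) ... rho_a.  The words [rdown j m.+1], 0 < j <= m.+1, are
   coset representatives of <rho_1, ..., rho_(m-1)> in <rho_1, ..., rho_m>. *)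
Definition rdown (a b : nat) : word := map r (rev (iota a (b - a))).

Lemma rdown_split a c b : a <= c <= b -> rdown a b = rdown c b ++ rdown a c.
Proof.
move=> hacb; rewrite /rdown; have -> : b - a = (c - a) + (b - c) by lia.
by rewrite iotaD rev_cat map_cat; congr (map r (rev (iota _ _)) ++ _); lia.
Qed.

Lemma rdown1 a : rdown a a.+1 = [:: r a].
Proof. by rewrite /rdown subSnn. Qed.

Lemma rdown0 a : rdown a a = [::].
Proof. by rewrite /rdown subnn. Qed.

Lemma rho_comm_far n k B : 0 < k < n -> all (fun b => (0 < b < n) && far k b) B ->
  wequiv n (map r B ++ [:: r k]) (r k :: map r B).
Proof.
move=> hk; elim: B => [|b B IH] /=; first by reflexivity.
move=> /andP[/andP[hb hf] /IH ->].
by apply: (we_cat (we_rel (rel_rcomm hb hk _)) (we_refl n (map r B))); rewrite /far in hf *; lia.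
Qed.

Lemma rdown_comm n a b k : 0 < a -> b <= n -> 0 < k < n -> (k.+1 < a) || (b < k) ->
  wequiv n (rdown a b ++ [:: r k]) (r k :: rdown a b).
Proof.
move=> ha hb hk hf; apply: rho_comm_far => //; apply/allP => x.
by rewrite mem_rev mem_iota /far; lia.
Qed.

Lemma rdown_braid n j k m : 0 < j < k -> k <= m -> m < n ->
  wequiv n (rdown j m.+1 ++ [:: r k]) (r k.-1 :: rdown j m.+1).
Proof.
move=> hjk hkm hmn; have kS : k = k.-1.+1 by lia.
have -> : rdown j m.+1 = rdown k.+1 m.+1 ++ [:: r k; r k.-1] ++ rdown j k.-1.
  have e : rdown k.-1 k = [:: r k.-1] by rewrite {2}kS rdown1.
  by rewrite (@rdown_split j k.+1) ?(@rdown_split j k k.+1) ?(@rdown_split j k.-1 k)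
    ?rdown1 ?e //; lia.
set X := rdown j k.-1; set Y := rdown k.+1 m.+1.
have commX : wequiv n (X ++ [:: r k]) (r k :: X) by apply: rdown_comm; lia.
have commY : wequiv n (Y ++ [:: r k.-1]) (r k.-1 :: Y) by apply: rdown_comm; lia.
have braid : wequiv n [:: r k; r k.-1; r k] [:: r k.-1; r k; r k.-1].
  by rewrite [in r k]kS; apply/we_sym/we_rel/rel_r3; lia.
rewrite -!catA /= commX -[r k :: _]/([:: r k; r k.-1; r k] ++ X) braid.
by rewrite /= -[r k.-1 :: _]cat1s catA commY; reflexivity.
Qed.

Lemma rdown_mulr n j k m : 0 < j <= m.+1 -> 0 < k <= m -> m < n ->
  exists vs j', [/\ all (fun v => 0 < v < m) vs, 0 < j' <= m.+1 &
    wequiv n (rdown j m.+1 ++ [:: r k]) (map r vs ++ rdown j' m.+1)].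
Proof.
move=> hj hk hmn; case: (ltngtP k.+1 j) => [kj|jk|<-].
- by exists [:: k], j; split; rewrite /= ?andbT; [lia | lia | apply: rdown_comm; lia].
- case: (ltngtP j k) => [jk'|kj|<-]; [|lia|].
  + by exists [:: k.-1], j; split; rewrite /= ?andbT; [lia | lia | apply: rdown_braid; lia].
  + exists [::], j.+1; split=> //; first lia.
    rewrite (@rdown_split j j.+1) ?rdown1 -?catA /=; last lia.
    by rewrite -[X in wequiv _ _ X]cats0 (we_rel (rel_rr _)); [reflexivity | lia].
- exists [::], k; split=> //; first lia.
  by rewrite (@rdown_split k k.+1) ?rdown1 //; [reflexivity | lia].
Qed.

Lemma rho_coset_form n m ks : m < n -> all (fun k => 0 < k <= m) ks ->
  exists vs j, [/\ all (fun v => 0 < v < m) vs, 0 < j <= m.+1 &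
    wequiv n (map r ks) (map r vs ++ rdown j m.+1)].
Proof.
move=> hmn; elim/last_ind: ks => [|ks k IH].
  by exists [::], m.+1; split; rewrite ?rdown0 ?ltnSn //; reflexivity.
rewrite all_rcons => /andP[hk /IH [vs [j [hvs hj e]]]].
have [vs' [j' [hvs' hj' e']]] := rdown_mulr hj hk hmn.
exists (vs ++ vs'), j'; split=> //; first by rewrite all_cat hvs.
by rewrite map_rcons -cats1 e -catA e' map_cat catA; reflexivity.
Qed.

Section RhoWords.
Variable n' : nat.
Local Notation n := n'.+1.

Lemma tprod_fix vs x : x < n -> all (fun v => 0 < v < x) vs ->
  tprod n vs (inord x) = inord x.
Proof.
move=> hx; elim: vs => [|v vs IH] /=; first by rewrite perm1.
by move=> /andP[hv /IH {}IH]; rewrite permM tpermD ?IH // eq_inord; lia.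
Qed.

Lemma tprod_rdown_last a d : 0 < a -> a + d <= n ->
  tprod n (rev (iota a d)) (inord (a + d).-1) = inord a.-1.
Proof.
move=> ha; elim: d => [|d IH] hd; first by rewrite addn0 perm1.
rewrite -[d.+1]addn1 iotaD rev_cat /= permM addn1 addnS /= tpermR -IH //; lia.
Qed.

(* The coset representative [rdown j m.+1] moves the (0-based) point m to j-1 while the
   rest of the word fixes it, so a word with trivial permutation has j = m+1. *)
Lemma rho_word_trivial m ks : m <= n -> all (fun k => 0 < k < m) ks ->
  tprod n ks = 1 -> wequiv n (map r ks) [::].
Proof.
elim: m ks => [|m IH] ks hm; first by case: ks => [|k ks] //=; [reflexivity | lia].
move=> hks ks1; have [vs [j [hvs hj e]]] := rho_coset_form hm hks.
have hlast : tprod n (rev (iota j (m.+1 - j))) (inord m) = inord j.-1.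
  by have := @tprod_rdown_last j (m.+1 - j); rewrite (_ : (j + _).-1 = m); [apply; lia | lia].
have := evalw_wequiv (@virt_perm_rep n) e.
rewrite evalw_cat /rdown !evalw_map_r // ks1 => ev.
have hjm : j = m.+1.
  have := congr1 (fun p : 'S_n => p (inord m)) ev.
  by rewrite /= perm1 permM tprod_fix // hlast => /eqP; rewrite eq_inord; lia.
move: ev e; rewrite hjm rdown0 subnn /= mulg1 cats0 => vs1 ->; apply: IH => //; lia.
Qed.

Lemma EP_sub_H w : EP n w -> H n w.
Proof.
move=> /EP_evalw [vw _ w1]; split=> //; suff : Hspan n w by [].
have [h [sh e]] := rho_decomposition vw.
have hks : all (fun k => 0 < k < n) (rho_indices w).
  by rewrite all_map all_filter; apply: sub_all vw => l hl; apply/implyP.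
have ks1 : tprod n (rho_indices w) = 1.
  move: w1; rewrite (evalw_wequiv (@virt_perm_rep _) e) evalw_cat Hspan_virt_perm //.
  by rewrite mul1g evalw_map_r.
by rewrite e (rho_word_trivial (leqnn _) hks ks1) cats0.
Qed.

End RhoWords.

Section FstPermTwist.
Variables (T : finType) (A : finZmodType) (d : T -> A).

Definition drift (p : {perm T}) (k : T) : A := (d k - d (p k))%R.

Lemma fst_perm_inj (p : {perm T}) : injective (fun x : T * A => (p x.1, x.2)).
Proof. by move=> [k a] [k' a'] [/perm_inj -> ->]. Qed.

Lemma twist_perm_inj (p : {perm T}) :
  injective (fun x : T * A => (p x.1, x.2 + drift p x.1)%R).
Proof.
move=> [k a] [k' a'] [/perm_inj ek]; rewrite -{}ek => /(congr1 (fun z => z - drift p k)%R).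
by rewrite !addrK => ->.
Qed.

Definition fst_perm p : {perm T * A} := perm (@fst_perm_inj p).

(* [twist_perm p] is [fst_perm p] conjugated by (k, a) |-> (k, a + d k). *)
Definition twist_perm p : {perm T * A} := perm (@twist_perm_inj p).

Lemma fst_permE p x : fst_perm p x = (p x.1, x.2).
Proof. by rewrite permE. Qed.

Lemma twist_permE p x : twist_perm p x = (p x.1, x.2 + drift p x.1)%R.
Proof. by rewrite permE. Qed.

Lemma fst_permM : {morph fst_perm : p q / p * q}.
Proof. by move=> p q; apply/permP => x; rewrite permM !fst_permE permM. Qed.

Lemma twist_permM : {morph twist_perm : p q / p * q}.
Proof.
move=> p q; apply/permP => x; rewrite permM !twist_permE /drift /= !permM.
by rewrite -!addrA (addrA (- d _)%R) addNr add0r.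
Qed.

Lemma twist_perm1 : twist_perm 1 = 1.
Proof. by apply/permP => -[k a]; rewrite twist_permE /drift !perm1 subrr addr0. Qed.

Lemma twist_fst_perm_comm p q q' : p * q = q' * p -> drift p =1 drift p \o q' ->
  twist_perm p * fst_perm q = fst_perm q' * twist_perm p.
Proof.
move=> pq dq; apply/permP => x; rewrite !permM twist_permE !fst_permE twist_permE /=.
by rewrite -!permM pq dq.
Qed.

Lemma drift_tperm p a b : drift p a = drift p b -> drift p =1 drift p \o tperm a b.
Proof. by move=> e x /=; case: tpermP => [->|->|]. Qed.

End FstPermTwist.

Arguments fst_perm {T A}.

Lemma natrS_sub (R : pzRingType) k : (k.+1%:R - k%:R = 1 :> R)%R.
Proof. by rewrite mulrSr addrAC subrr add0r. Qed.

Definition sigma_rho_sq : word := [:: s 1; r 1; s 1; r 1].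

Section TwistedRepresentation.
Variable n' : nat.
Local Notation n := n'.+1.

Definition height (k : 'I_n) : 'Z_3 := ((k : nat)%:R)%R.

Definition twisted_gen (g : gen) : {perm 'I_n * 'Z_3} :=
  match g with Sig i => fst_perm (tau n i) | Rho i => twist_perm height (tau n i) end.

Lemma height_inord x : x < n -> height (inord x) = (x%:R)%R.
Proof. by move=> hx; rewrite /height inordK. Qed.

Lemma drift_far i j : 0 < i < n -> 0 < j < n -> far i j ->
  drift height (tau n j) =1 drift height (tau n j) \o tau n i.
Proof.
move=> hi hj hf; apply: (drift_tperm (a := inord i.-1) (b := inord i)).
by rewrite /drift tauE !tpermD ?subrr // eq_inord; rewrite /far in hf; lia.
Qed.

(* Heights of consecutive points differ by 1; this is what the mixed relation needs. *)
Lemma drift_mixed i : 0 < i -> i.+1 < n ->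
  drift height (tau n i * tau n i.+1) =1 drift height (tau n i * tau n i.+1) \o tau n i.+1.
Proof.
move=> hi hin; apply: (drift_tperm (a := inord i) (b := inord i.+1)).
have neq a b : a < n -> b < n -> a != b -> (inord a : 'I_n) != inord b.
  by move=> ha hb; rewrite eq_inord.
rewrite /drift !permM !tauE /= tpermR [in LHS]tpermD ?[tperm (inord i.-1) _ _]tpermD ?tpermR;
  try by apply: neq; lia.
rewrite !height_inord; [|lia..].
have -> : i = i.-1.+1 by lia.
by rewrite /= !natrS_sub.
Qed.

Lemma twisted_rep : vbrep n twisted_gen.
Proof.
move=> u v [] => *; rewrite /evalw; cbn [foldr fst snd s r twisted_gen]; rewrite !mulg1.
- by rewrite -!fst_permM !mulgA tau_braid.
- by rewrite -!fst_permM tau_comm.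
- by rewrite -!twist_permM !mulgA tau_braid.
- by rewrite -!twist_permM tau_comm.
- by rewrite -twist_permM tauK twist_perm1.
- by apply/esym/twist_fst_perm_comm; [apply/esym/tau_comm | apply: drift_far].
- rewrite [LHS]mulgA -!twist_permM; apply: twist_fst_perm_comm; last exact: drift_mixed.
  by rewrite tau_braid // mulgA.
Qed.

Lemma twisted_Pn t : Pn n t -> evalw twisted_gen t = 1.
Proof. exact: evalw_Pn twisted_rep (@fst_permM _ _) _. Qed.

Lemma twisted_sigma_rho_sq : 0 < n' -> evalw twisted_gen sigma_rho_sq != 1.
Proof.
move=> hn; set t := tau n 1.
have step a : (fst_perm t * twist_perm height t) (inord 0, a) = (inord 0, a + 1)%R.
  rewrite permM fst_permE twist_permE /drift /t tauE /= tpermL tpermR !height_inord //.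
  by rewrite subr0.
apply/eqP => /(congr1 (fun p : {perm _} => p (inord 0, 0%R))).
rewrite /evalw; cbn [sigma_rho_sq foldr fst snd s r twisted_gen]; rewrite -/t mulg1.
by rewrite !mulgA -mulgA permM !step perm1 => -[].
Qed.

End TwistedRepresentation.

Lemma sigma_rho_sq_EP n : 1 < n -> EP n sigma_rho_sq.
Proof.
move=> hn; apply/EP_evalw; split; first by rewrite /valid /= hn.
  rewrite /evalw; cbn [sigma_rho_sq foldr fst snd s r full_perm gidx].
  by rewrite mulg1 !mulgA !tauK !mul1g tauK.
rewrite /evalw; cbn [sigma_rho_sq foldr fst snd s r virt_perm].
by rewrite !mul1g mulg1 tauK.
Qed.

Lemma sigma_rho_sq_notin_closure_Pn n' : ~ normal_closure n'.+2 (Pn n'.+2) sigma_rho_sq.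
Proof.
move=> /(evalw_normal_closure (@twisted_rep n'.+1) (@twisted_Pn _)) /eqP.
exact/negP/twisted_sigma_rho_sq.
Qed.

Definition eps n (w : word) : 'S_n := (chi n w).1.

Lemma epsE n w : eps n w = evalw (full_perm n) w * (evalw (virt_perm n) w)^-1.
Proof. by rewrite /eps chiE. Qed.

Lemma eps_H n w : H n w -> eps n w = evalw (full_perm n) w.
Proof. by move=> /H_virt_perm; rewrite epsE => ->; rewrite invg1 mulg1. Qed.

Lemma eps_x n i j : i < j ->
  eps n (x_up i j) = eps_val n i j /\ eps n (x_down i j) = eps_val n i j.
Proof.
move=> hij; rewrite !epsE /x_up /x_down /eps_val !evalw_cat !evalw_map_r // !tprod_rev /=.
have -> : j - i = (j - i.+1).+1 by lia.
rewrite /= /full_perm /= !mulg1 !mul1g !mulVg invg1 !mulg1; split; first by rewrite mulgA.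
by rewrite invMg tauV (mulgA (tau n i)) tauK mul1g.
Qed.

Lemma EP_ker_eps n' w : EP n'.+1 w <-> H n'.+1 w /\ eps n'.+1 w = 1.
Proof.
split=> [wEP|[wH]]; first split; first exact: EP_sub_H.
- by move/EP_evalw: wEP => [_ w1 w2]; rewrite epsE w1 w2 invg1 mulg1.
- by rewrite eps_H // => w1; apply/EP_evalw; split=> //; [case: wH | apply: H_virt_perm].
Qed.

Theorem proposition7p4 (n : nat) (hn : 2 <= n) :
  exists eps : word -> 'S_n,
    [/\ (forall u v, H n u -> H n v -> wequiv n u v -> eps u = eps v),
        (forall u v, H n u -> H n v -> eps (u ++ v) = (eps u * eps v)%g),
        (forall i j, 1 <= i -> i < j -> j <= n ->
            eps (x_up i j) = eps_val n i j /\ eps (x_down i j) = eps_val n i j),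
        subgroup_iso n (EP n) (fun w => H n w /\ eps w = 1%g)
      & (forall w, normal_closure n (Pn n) w -> EP n w) /\
        (exists w, EP n w /\ ~ normal_closure n (Pn n) w)].
Proof.
case: n hn => [|[|n']] // hn; exists (eps n'.+2); split.
- move=> u v _ _ e.
  by rewrite !epsE (evalw_wequiv (@full_perm_rep _) e) (evalw_wequiv (@virt_perm_rep _) e).
- by move=> u v hu hv; rewrite !eps_H ?evalw_cat //; apply: subgroup_gen_cat.
- by move=> i j _ hij _; apply: eps_x.
- exists id; split=> // [w /EP_ker_eps //|u v _ _|w' /EP_ker_eps wEP]; first by reflexivity.
  by exists w'; split=> //; reflexivity.
- split; first exact: normal_closure_Pn_sub_EP.
  by exists sigma_rho_sq; split; [apply: sigma_rho_sq_EP | apply: sigma_rho_sq_notin_closure_Pn].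
Qed.
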